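(* In the setting of the context, let $\omega\in\overline{\mathbb{C}}\setminus(i\mathbb{R}\cup\{\delta_+,\delta_-,\infty\})$, $\omega=\omega_\Re+i\omega_\Im$. Then $\omega\in W_\Omega(T)$ if and only if $\omega\notin\partial\mathcal{D}$ and $$\hat\beta(\omega):=\frac{-2\omega_\Im\left((-\omega_\Re^2+\omega_\Im^2+d\omega_\Im+c)^2+\omega_\Re^2(2\omega_\Im+d)^2\right)}{d|\omega|^2+2c\omega_\Im}\in\overline{W(B)}$$ and $$\hat\alpha(\omega):=\frac{(2\omega_\Im+d)|\omega|^4}{d|\omega|^2+2c\omega_\Im}\in\overline{W(A)}.$$
   Context: Let $\mathcal{H}$ be a Hilbert space, $A$ a selfadjoint (possibly unbounded) operator in $\mathcal{H}$ and $B$ a nonzero bounded selfadjoint operator. Let $c\ge0$, $d>0$, $\delta_\pm:=\pm\sqrt{c-d^2/4}-id/2$ (principal square root). $W(A),W(B)\subset\mathbb{R}$ are the numerical ranges. For real $\alpha,\beta$ let $p_{(\alpha,\beta)}(\omega):=(\alpha-\omega^2)(c-id\omega-\omega^2)-\beta\omega^2$ with roots $r_1,\dots,r_4$ labelled continuously in $(\alpha,\beta)$ and extended by limits to $\overline{\mathbb{R}}\times\mathbb{R}$ ($\overline{\mathbb{R}}=\mathbb{R}\cup\{\pm\infty\}$), values in $\overline{\mathbb{C}}$. Let $\Omega:=\overline{W(A)}\times\overline{W(B)}$ (closure of $W(A)$ in $\overline{\mathbb{R}}$) and $W_\Omega(T):=\bigcup_{n=1}^4\bigcup_{(\alpha,\beta)\in\Omega}r_n(\alpha,\beta)$.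 Let $\mathcal{D}:=\{\omega\in\mathbb{C}:|\omega+ic/d|<c/d\}$. *)

From HB Require Import structures.
From mathcomp Require Import all_boot all_order all_algebra.
From mathcomp Require Import complex.
From mathcomp Require Import all_classical all_reals.
From mathcomp Require Import topology normedtype ereal.


Set Implicit Arguments.
Unset Strict Implicit.
Unset Printing Implicit Defensive.

Import Order.TTheory GRing.Theory Num.Theory.
Import numFieldNormedType.Exports.
Local Open Scope ring_scope.
Local Open Scope classical_set_scope.
Local Open Scope complex_scope.

Section Defs.
Variable R : realType.
Local Notation C := R[i].

Definition cabs (z : C) : R := ComplexField.Normc.normc z.

Section Hilbert.
Variable H : lmodType C.
Variable inner : H -> H -> C.

Definition hnorm (x : H) : R := Num.sqrt (complex.Re (inner x x)).

Definition is_hilbert : Prop :=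
  [/\ (forall (a : C) (x y z : H), inner (a *: x + y) z = a * inner x z + inner y z),
      (forall x y : H, inner y x = (inner x y)^*),
      (forall x : H, x != 0 -> 0 < inner x x) &
      (forall u : nat -> H,
         (forall e : R, 0 < e -> exists N : nat, forall m n : nat,
             (N <= m)%N -> (N <= n)%N -> hnorm (u m - u n) < e) ->
         exists l : H, forall e : R, 0 < e -> exists N : nat, forall n : nat,
             (N <= n)%N -> hnorm (u n - l) < e)].

(* (possibly unbounded) selfadjoint operator A with domain D:
   D is a dense linear subspace, A is linear on D, and A = A^*, i.e.
   y \in dom(A^* ) with A^* y = z  <->  y \in D and A y = z. *)
Definition selfadjoint (D : set H) (A : H -> H) : Prop :=
  [/\ D 0,
      (forall (a : C) (x y : H), D x -> D y -> D (a *: x + y)),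
      (forall (a : C) (x y : H), D x -> D y -> A (a *: x + y) = a *: A x + A y),
      (forall (x : H) (e : R), 0 < e -> exists y : H, D y /\ hnorm (x - y) < e) &
      (forall y z : H, (forall x : H, D x -> inner (A x) y = inner x z) <->
                       (D y /\ z = A y))].

Definition bounded_selfadjoint (B : H -> H) : Prop :=
  [/\ (forall (a : C) (x y : H), B (a *: x + y) = a *: B x + B y),
      (exists M : R, forall x : H, hnorm (B x) <= M * hnorm x) &
      (forall x y : H, inner (B x) y = inner x (B y))].

Definition numrange (D : set H) (A : H -> H) : set R :=
  [set r : R | exists x : H, [/\ D x, hnorm x = 1 & inner (A x) x = r%:C]].
End Hilbert.

Definition pT (c d alpha beta : R) (w : C) : C :=
  (alpha%:C - w ^+ 2) * (c%:C - 'i * d%:C * w - w ^+ 2) - beta%:C * w ^+ 2.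

Definition psqrt (x : R) : C :=
  if 0 <= x then (Num.sqrt x)%:C else (Num.sqrt (- x))*i.

Definition delta_p (c d : R) : C := psqrt (c - d ^+ 2 / 4%:R) - 'i * (d / 2%:R)%:C.
Definition delta_m (c d : R) : C := - psqrt (c - d ^+ 2 / 4%:R) - 'i * (d / 2%:R)%:C.

(* extended complex plane: None = infinity *)
Definition Cbar := option C.

(* limits in the extended complex plane of roots r_n(alpha, beta) as
   alpha -> +oo (up = true) or alpha -> -oo (up = false) *)
Definition limit_roots (c d : R) (up : bool) (beta : R) : set Cbar :=
  [set w : Cbar | exists (al : nat -> R) (z : nat -> C),
     [/\ (forall M : R, exists N : nat, forall k : nat, (N <= k)%N ->
            if up then M < al k else al k < M),
         (forall k : nat, pT c d (al k) beta (z k) = 0) &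
         match w with
         | Some w' => forall e : R, 0 < e -> exists N : nat, forall k : nat,
                        (N <= k)%N -> cabs (z k - w') < e
         | None => forall M : R, exists N : nat, forall k : nat,
                        (N <= k)%N -> M < cabs (z k)
         end]].

(* { r_1(alpha,beta), ..., r_4(alpha,beta) } for (alpha,beta) in Rbar x R *)
Definition root_set (c d : R) (a : \bar R) (beta : R) : set Cbar :=
  match a with
  | EFin alpha => [set w : Cbar | exists z : C, w = Some z /\ pT c d alpha beta z = 0]
  | +oo%E => limit_roots c d true beta
  | -oo%E => limit_roots c d false beta
  end.

Definition W_Omega (c d : R) (WA WB : set R) : set Cbar :=
  [set w : Cbar | exists (a : \bar R) (beta : R),
     [/\ closure [set r%:E | r in WA] a, closure WB beta & root_set c d a beta w]].

Definition discD (c d : R) : set C :=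
  [set z : C | cabs (z + 'i * (c / d)%:C) < c / d].

Definition bdD (c d : R) : set C :=
  [set z : C | forall e : R, 0 < e ->
     (exists u : C, cabs (u - z) < e /\ discD c d u) /\
     (exists u : C, cabs (u - z) < e /\ ~ discD c d u)].

Definition beta_hat (c d : R) (w : C) : R :=
  let a := complex.Re w in let b := complex.Im w in
  (- 2%:R * b * ((- a ^+ 2 + b ^+ 2 + d * b + c) ^+ 2 + a ^+ 2 * (2%:R * b + d) ^+ 2))
  / (d * (a ^+ 2 + b ^+ 2) + 2%:R * c * b).

Definition alpha_hat (c d : R) (w : C) : R :=
  let a := complex.Re w in let b := complex.Im w in
  ((2%:R * b + d) * (a ^+ 2 + b ^+ 2) ^+ 2) / (d * (a ^+ 2 + b ^+ 2) + 2%:R * c * b).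

End Defs.

From HB Require Import structures.
From mathcomp Require Import all_boot all_order all_algebra.
From mathcomp Require Import complex.
From mathcomp Require Import all_classical all_reals.
From mathcomp Require Import topology normedtype ereal.
From mathcomp Require Import ring lra.

(* Write q(w) = c - i d w - w^2, so that the pencil is
   p(w) = alpha q(w) - w^2 (q(w) + beta), a real-linear equation in (alpha, beta).
   The determinant of its real and imaginary parts is a multiple of
   Re w * den(w), where den(w) = d |w|^2 + 2 c Im w = d (|w + i c/d|^2 - (c/d)^2)
   vanishes, for Re w <> 0, exactly on the boundary of D.  Off that circle Cramer's rule gives
   (alpha, beta) = (alpha_hat w, beta_hat w) as the only solution, while a root
   on the circle is one of delta_+, delta_-.  Finally, finite limits of roots as
   alpha -> +-oo are zeros of q (alpha is bounded near non-zeros of q), i.e. again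
   delta_+ or delta_-. *)

Import Order.TTheory GRing.Theory Num.Theory.
Import numFieldNormedType.Exports.
Local Open Scope ring_scope.
Local Open Scope classical_set_scope.
Local Open Scope complex_scope.

Section QuadraticPencil.
Set Implicit Arguments.
Unset Strict Implicit.
Variable R : realType.
Local Notation C := R[i].
Implicit Types (a b s al be : R) (u v w z : C).

Lemma cabsD u v : cabs (u + v) <= cabs u + cabs v.
Proof. exact: le_normcD. Qed.

Lemma cabsM u v : cabs (u * v) = cabs u * cabs v.
Proof. exact: ComplexField.Normc.normcM. Qed.

Lemma cabsN u : cabs (- u) = cabs u.
Proof. exact: normcN. Qed.

Lemma cabsB u v : cabs (u - v) = cabs (v - u).
Proof. by rewrite -cabsN opprB. Qed.

Lemma cabs_ge0 u : 0 <= cabs u.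
Proof. by case: u => a b; exact: sqrtr_ge0. Qed.

Lemma cabs_gt0 u : u != 0 -> 0 < cabs u.
Proof.
move=> u_neq0; rewrite lt_def cabs_ge0 andbT.
by apply/eqP => /ComplexField.Normc.eq0_normc u0; rewrite u0 eqxx in u_neq0.
Qed.

Lemma cabs_real s : cabs s%:C = `|s|.
Proof. by rewrite /cabs /= expr0n /= addr0 sqrtr_sqr. Qed.

Lemma cabs_iM_real s : cabs ('i * s%:C) = `|s|.
Proof. by rewrite cabsM cabs_real /cabs /= expr0n /= add0r expr1n sqrtr1 mul1r. Qed.

Variables c d : R.
Local Notation k := (c / d).

Definition hat_den w : R := d * (complex.Re w ^+ 2 + complex.Im w ^+ 2) + 2%:R * c * complex.Im w.

Definition qT w : C := c%:C - 'i * d%:C * w - w ^+ 2.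

Lemma alpha_hatE a b :
  alpha_hat c d (a +i* b) = (2%:R * b + d) * (a ^+ 2 + b ^+ 2) ^+ 2 / hat_den (a +i* b).
Proof. by []. Qed.

Lemma beta_hatE a b :
  beta_hat c d (a +i* b) =
  - 2%:R * b * ((- a ^+ 2 + b ^+ 2 + d * b + c) ^+ 2 + a ^+ 2 * (2%:R * b + d) ^+ 2)
  / hat_den (a +i* b).
Proof. by []. Qed.

Hypothesis d_gt0 : 0 < d.

Lemma hat_denE w : hat_den w = d * (cabs (w + 'i * k%:C) ^+ 2 - k ^+ 2).
Proof.
case: w => a b; have -> : cabs (a +i* b + 'i * k%:C) = Num.sqrt (a ^+ 2 + (b + k) ^+ 2).
  by rewrite /cabs /=; congr Num.sqrt; rewrite !expr2 /=; ring.
rewrite sqr_sqrtr ?addr_ge0 ?sqr_ge0 // /hat_den /=; by field; rewrite gt_eqF.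
Qed.

Lemma not_bdD_off_circle w : cabs (w + 'i * k%:C) != k -> ~ bdD c d w.
Proof.
set r := cabs _; rewrite neq_lt => /orP[r_lt_k | k_lt_r] w_bd.
- have [_ [u [uw u_out]]] := w_bd (k - r) ltac:(lra).
  apply: u_out; rewrite /discD /=.
  have -> : u + 'i * k%:C = (u - w) + (w + 'i * k%:C) by ring.
  by apply: le_lt_trans (cabsD _ _) _; rewrite -/r; lra.
- have [[u [uw u_in]] _] := w_bd (r - k) ltac:(lra).
  have : r <= cabs (w - u) + cabs (u + 'i * k%:C).
    by rewrite /r (_ : w + _ = (w - u) + (u + 'i * k%:C)); [exact: cabsD | ring].
  by move: u_in; rewrite /discD /= cabsB; lra.
Qed.

Lemma bdD_on_circle w : 0 < k -> cabs (w + 'i * k%:C) = k -> bdD c d w.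
Proof.
move=> k_gt0 wk e e_gt0; set v := w + 'i * k%:C.
(* the points w -+ s v lie on the diameter through w, on either side of the circle *)
set s := e / (e + 2%:R * k).
have s_gt0 : 0 < s by rewrite divr_gt0 //; lra.
have s_lt1 : s < 1 by rewrite ltr_pdivrMr; lra.
have sk_lt_e : s * k < e by rewrite mulrAC ltr_pdivrMr; [nra | lra].
have dist t : cabs (w + t%:C * v - w) = `|t| * k.
  by rewrite addrAC subrr add0r cabsM cabs_real wk.
have centre t : cabs (w + t%:C * v + 'i * k%:C) = `|1 + t| * k.
  rewrite (_ : _ + _ = (1 + t)%:C * v) ?cabsM ?cabs_real ?wk //.
  by rewrite /v rmorphD rmorph1; ring.
split.
- exists (w + (- s)%:C * v); rewrite dist normrN gtr0_norm //; split => //.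
  by rewrite /discD /= centre ger0_norm; nra.
- exists (w + s%:C * v); rewrite dist gtr0_norm //; split => //.
  by rewrite /discD /= centre ger0_norm; nra.
Qed.

Hypothesis c_ge0 : 0 <= c.

Lemma bdD_hat_den w : complex.Re w != 0 -> bdD c d w <-> hat_den w = 0.
Proof.
move=> re_w; have k_ge0 : 0 <= k by rewrite divr_ge0 // ltW.
have -> : (hat_den w = 0) <-> cabs (w + 'i * k%:C) = k.
  rewrite hat_denE; split => [/eqP | ->]; last by rewrite subrr mulr0.
  by rewrite mulf_eq0 gt_eqF //= subr_eq0 eqrXn2 ?cabs_ge0 // => /eqP.
split => [w_bd | wk]; first by apply: contrapT => /eqP /not_bdD_off_circle.
suff k_gt0 : 0 < k by exact: bdD_on_circle.
rewrite lt_def k_ge0 andbT; apply: contraNneq re_w => k0.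
by move: wk; rewrite k0 (_ : 0%:C = 0) // mulr0 addr0 => /ComplexField.Normc.eq0_normc ->.
Qed.

Definition pT_re al be a b : R :=
  (al - (a * a - b * b)) * (c + d * b - a * a + b * b)
  + (2%:R * a * b) * (- (a * (2%:R * b + d))) - be * (a * a - b * b).

Definition pT_im al be a b : R :=
  (al - (a * a - b * b)) * (- (a * (2%:R * b + d)))
  - (2%:R * a * b) * (c + d * b - a * a + b * b) - be * (2%:R * a * b).

Lemma pT_ReIm al be a b : pT c d al be (a +i* b) = pT_re al be a b +i* pT_im al be a b.
Proof. by rewrite /pT /pT_re /pT_im !expr2 /=; congr (_ +i* _); ring. Qed.

(* Cramer's rule for the real system Re p = Im p = 0 in (al, be), whose
   determinant is a * hat_den. *)
Lemma pT_root_cramer al be a b : pT c d al be (a +i* b) = 0 ->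
  al * (a * hat_den (a +i* b)) = a * ((2%:R * b + d) * (a ^+ 2 + b ^+ 2) ^+ 2) /\
  be * (a * hat_den (a +i* b)) =
    a * (- 2%:R * b * ((- a ^+ 2 + b ^+ 2 + d * b + c) ^+ 2
                       + a ^+ 2 * (2%:R * b + d) ^+ 2)).
Proof.
rewrite pT_ReIm => /eqP; rewrite eq_complex /= => /andP[/eqP re0 /eqP im0].
split; apply/eqP; rewrite -subr_eq0; apply/eqP.
- transitivity (2%:R * a * b * pT_re al be a b - (a * a - b * b) * pT_im al be a b).
    by rewrite /pT_re /pT_im /hat_den /=; ring.
  by rewrite re0 im0; ring.
- transitivity (- (a * (2%:R * b + d)) * pT_re al be a b
                - (c + d * b - a * a + b * b) * pT_im al be a b).
    by rewrite /pT_re /pT_im /hat_den /=; ring.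
  by rewrite re0 im0; ring.
Qed.

Lemma delta_of_hat_den_eq0 a b : a != 0 -> 2%:R * b + d = 0 ->
  hat_den (a +i* b) = 0 -> a +i* b = delta_p c d \/ a +i* b = delta_m c d.
Proof.
move=> a_neq0 b_eq den0; have eb : b = - (d / 2%:R) by lra.
have ex : c - d ^+ 2 / 4%:R = a ^+ 2.
  have : d * (a ^+ 2 - (c - d ^+ 2 / 4%:R)) = 0 by rewrite -den0 /hat_den /= eb; field.
  by move/eqP; rewrite mulf_eq0 gt_eqF //= subr_eq0 => /eqP ->.
rewrite /delta_p /delta_m /psqrt ex sqr_ge0 sqrtr_sqr.
have [a_ge0 | a_lt0] := leP 0 a; [left; rewrite ger0_norm // | right; rewrite ltr0_norm //];
  by apply/eqP; rewrite eq_complex /=; apply/andP; split; apply/eqP; lra.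
Qed.

Lemma pT_root_hat_den_neq0 al be a b : a != 0 ->
  a +i* b != delta_p c d -> a +i* b != delta_m c d ->
  pT c d al be (a +i* b) = 0 -> hat_den (a +i* b) != 0.
Proof.
move=> a_neq0 ne_p ne_m /pT_root_cramer[al_eq _]; apply/eqP => den0.
have b_eq : 2%:R * b + d = 0.
  have n_neq0 : a ^+ 2 + b ^+ 2 != 0.
    by rewrite paddr_eq0 ?sqr_ge0 // sqrf_eq0 (negbTE a_neq0).
  move: al_eq; rewrite den0 !mulr0 => /esym /eqP.
  by rewrite !mulf_eq0 (negbTE a_neq0) (negbTE n_neq0) /= !orbF => /eqP.
by case: (delta_of_hat_den_eq0 a_neq0 b_eq den0) => /eqP; apply/negP.
Qed.

Lemma pT_rootP al be a b : a != 0 ->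
  a +i* b != delta_p c d -> a +i* b != delta_m c d ->
  pT c d al be (a +i* b) = 0 <->
  [/\ hat_den (a +i* b) != 0, al = alpha_hat c d (a +i* b) & be = beta_hat c d (a +i* b)].
Proof.
move=> a_neq0 ne_p ne_m; split => [root | [den_neq0 -> ->]].
  have den_neq0 := pT_root_hat_den_neq0 a_neq0 ne_p ne_m root.
  have aden_neq0 : a * hat_den (a +i* b) != 0 by rewrite mulf_neq0.
  have [al_eq be_eq] := pT_root_cramer root.
  split => //; apply: (mulIf aden_neq0); rewrite ?al_eq ?be_eq;
    by rewrite ?alpha_hatE ?beta_hatE; field.
move: den_neq0; rewrite pT_ReIm alpha_hatE beta_hatE /hat_den /= => den_neq0.
by apply/eqP; rewrite eq_complex /= /pT_re /pT_im; apply/andP; split; apply/eqP; field.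
Qed.

Lemma pT_qT al be w : pT c d al be w = al%:C * qT w - w ^+ 2 * (qT w + be%:C).
Proof. by rewrite /pT /qT; ring. Qed.

Lemma cabs_qTB z w : cabs (qT z - qT w) <= cabs (z - w) * (d + cabs z + cabs w).
Proof.
have -> : qT z - qT w = (z - w) * (- ('i * d%:C) - (z + w)) by rewrite /qT; ring.
rewrite cabsM; apply: ler_wpM2l; first exact: cabs_ge0.
apply: le_trans (cabsD _ _) _; rewrite !cabsN cabs_iM_real (ger0_norm (ltW d_gt0)).
by rewrite -addrA lerD2l; exact: cabsD.
Qed.

Lemma pT_root_alpha al be z : pT c d al be z = 0 ->
  `|al| * cabs (qT z) = cabs z ^+ 2 * cabs (qT z + be%:C).
Proof.
move=> root; have : al%:C * qT z = z ^+ 2 * (qT z + be%:C).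
  by apply/eqP; rewrite -subr_eq0 -pT_qT root.
by rewrite -cabs_real -cabsM => ->; rewrite cabsM !expr2 cabsM.
Qed.

Lemma pT_root_alpha_bounded be w : qT w != 0 ->
  exists e, 0 < e /\ exists M, forall al z,
    pT c d al be z = 0 -> cabs (z - w) < e -> `|al| <= M.
Proof.
move=> qw_neq0; set K := cabs (qT w); have K_gt0 : 0 < K by exact: cabs_gt0.
have d_ge0 := ltW d_gt0; have w_ge0 := cabs_ge0 w.
set L := d + 2%:R * cabs w + 1.
have L_gt0 : 0 < L by rewrite /L; lra.
set e := K / (K + 2%:R * L).
have e_gt0 : 0 < e by rewrite divr_gt0 //; lra.
have e_lt1 : e < 1 by rewrite ltr_pdivrMr; lra.
have eL : e * L <= K / 2%:R.
  rewrite mulrAC ler_pdivrMr; last lra.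
  by rewrite mulrAC ler_pdivlMr; [nra | lra].
exists e; split => //; exists ((cabs w + 1) ^+ 2 * (3%:R * K + 2%:R * `|be|) / K).
move=> al z root zw; have zw_ge0 := cabs_ge0 (z - w).
have z_le : cabs z <= cabs w + 1.
  by rewrite (_ : z = (z - w) + w); [apply: le_trans (cabsD _ _) _; lra | ring].
have qz_near : cabs (qT z - qT w) <= K / 2%:R.
  apply: le_trans (cabs_qTB z w) (le_trans _ eL).
  have z_ge0 := cabs_ge0 z.
  by apply: ler_pM; [lra | lra | lra | rewrite /L; lra].
have qz_ge : K <= 2%:R * cabs (qT z).
  have := cabsD (qT z) (qT w - qT z); rewrite addrC subrK cabsB -/K; lra.
have qbz_le : 2%:R * cabs (qT z + be%:C) <= 3%:R * K + 2%:R * `|be|.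
  have := cabsD (qT z - qT w) (qT w); rewrite subrK -/K => qz_le.
  have := cabsD (qT z) be%:C; rewrite cabs_real; lra.
have z2_le : cabs z ^+ 2 <= (cabs w + 1) ^+ 2.
  by rewrite ler_sqr ?nnegrE ?cabs_ge0 //; lra.
rewrite ler_pdivlMr //; apply: le_trans (ler_wpM2l (normr_ge0 al) qz_ge) _.
rewrite mulrCA (pT_root_alpha root) mulrCA.
by apply: ler_pM; rewrite ?mulr_ge0 ?sqr_ge0 ?cabs_ge0.
Qed.

Lemma limit_roots_qT_eq0 up be w : limit_roots c d up be (Some w) -> qT w = 0.
Proof.
case=> al [z [al_div root z_cvg]]; apply: contrapT => /eqP qw_neq0.
have [e [e_gt0 [M al_le]]] := pT_root_alpha_bounded be qw_neq0.
have [N1 z_near] := z_cvg e e_gt0.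
have [N2 al_big] : exists N, forall n, (N <= n)%N -> M < `|al n|.
  case: up al_div => al_div.
  - have [N al_gt] := al_div M; exists N => n /al_gt /lt_le_trans; apply.
    exact: ler_norm.
  - have [N al_lt] := al_div (- M); exists N => n /al_lt; rewrite ltrNr => al_lt'.
    by apply: lt_le_trans al_lt' _; rewrite -normrN ler_norm.
have := al_le _ _ (root (maxn N1 N2)) (z_near _ (leq_maxl _ _)).
by rewrite leNgt al_big // leq_maxr.
Qed.

Lemma qT_root_delta a b : a != 0 -> qT (a +i* b) = 0 ->
  a +i* b = delta_p c d \/ a +i* b = delta_m c d.
Proof.
move=> a_neq0; rewrite /qT expr2 => /eqP; rewrite eq_complex /=.
move=> /andP[/eqP re0 /eqP im0].
have b_eq : 2%:R * b + d = 0.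
  have : a * (2%:R * b + d) = 0 by nra.
  by move/eqP; rewrite mulf_eq0 (negbTE a_neq0) => /eqP.
apply: delta_of_hat_den_eq0 => //.
have -> : hat_den (a +i* b) = (2%:R * b + d) * (c + d * b) - d * (c + d * b - a * a + b * b).
  by rewrite /hat_den /=; ring.
by rewrite b_eq; nra.
Qed.

End QuadraticPencil.

Theorem proposition2p6 (R : realType) (H : lmodType R[i]) (inner : H -> H -> R[i])
  (DA : set H) (A B : H -> H) (c d : R) (w : R[i]) :
  is_hilbert inner ->
  selfadjoint inner DA A ->
  bounded_selfadjoint inner B ->
  (exists x : H, B x != 0) ->
  0 <= c -> 0 < d ->
  complex.Re w != 0 -> w != delta_p c d -> w != delta_m c d ->
  (W_Omega c d (numrange inner DA A) (numrange inner setT B) (Some w) <->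
   [/\ ~ bdD c d w,
       closure (numrange inner setT B) (beta_hat c d w) &
       closure [set r%:E | r in numrange inner DA A] (alpha_hat c d w)%:E]).
Proof.
move=> _ _ _ _ c_ge0 d_gt0; case: w => a b /= a_neq0 ne_p ne_m.
have no_limit_root up be : ~ limit_roots c d up be (Some (a +i* b)).
  move/(limit_roots_qT_eq0 d_gt0)/(qT_root_delta d_gt0 a_neq0).
  by case=> /eqP; apply/negP.
have bdD_iff := bdD_hat_den d_gt0 c_ge0 (w := a +i* b) a_neq0.
split.
- case=> -[al| |] [be [A_al B_be root]].
  + case: root => z [[<-]] /(pT_rootP d_gt0 _ _ a_neq0 ne_p ne_m) [den_neq0 al_eq be_eq].
    split; first by rewrite bdD_iff; exact/eqP.
    * by rewrite -be_eq.
    * by rewrite -al_eq.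
  + by case: (no_limit_root true be).
  + by case: (no_limit_root false be).
- case=> not_bd B_be A_al.
  exists (alpha_hat c d (a +i* b))%:E, (beta_hat c d (a +i* b)); split => //.
  exists (a +i* b); split => //; apply/(pT_rootP d_gt0 _ _ a_neq0 ne_p ne_m).
  by split => //; apply/eqP; rewrite -bdD_iff.
Qed.
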